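(* Let $m$ be a positive integer, $M=\{1,\ldots,m\}$, and let $Y\subseteq\mathbb{R}^m$. If the free disposal hull $Y+\mathbb{R}^m_{\geq 0}$ of $Y$ is convex, then the following are equivalent: $(\alpha)$ $\mathrm{WM}\,Y=\mathrm{M}\,Y$; $(\beta)$ $\displaystyle\bigcup_{\emptyset\neq I\subseteq M}\mathrm{M}_I Y\subseteq \mathrm{M}\,Y$.
   Context: Let $M=\{1,\ldots,m\}$. For a nonempty $I\subseteq M$ and $y=(y_1,\ldots,y_m),y'=(y'_1,\ldots,y'_m)\in\mathbb{R}^m$: $y\leq_I y'$ means $y_i\leq y'_i$ for all $i\in I$; $y<_I y'$ means $y_i<y'_i$ for all $i\in I$; $y\lneq_I y'$ means $y_i\leq y'_i$ for all $i\in I$ and $y_j<y'_j$ for some $j\in I$. For $Y\subseteq\mathbb{R}^m$, $\mathrm{M}_I Y$ (resp. $\mathrm{WM}_I Y$) is the set of all $y'\in Y$ for which there is no $y\in Y$ with $y\lneq_I y'$ (resp. $y<_I y'$). Set $\mathrm{M}\,Y=\mathrm{M}_M Y$ (efficient set) and $\mathrm{WM}\,Y=\mathrm{WM}_M Y$ (weakly efficient set). $\mathbb{R}^m_{\geq0}=\{(y_1,\ldots,y_m)\in\mathbb{R}^m: y_i\ge 0\ \forall i\}$, and the free disposal hull of $Z\subseteq\mathbb{R}^m$ is $Z+\mathbb{R}^m_{\geq0}$. *)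

From Stdlib Require Import Reals.
Open Scope R_scope.

(* Index set M = {1,...,m} represented as {i : nat | (i < m)%nat} (0-based). *)
Definition idx (m : nat) : Type := { i : nat | (i < m)%nat }.

Definition vec (m : nat) : Type := idx m -> R.

Definition vset (m : nat) : Type := vec m -> Prop.
Definition iset (m : nat) : Type := idx m -> Prop.

Definition nonempty_iset {m : nat} (I : iset m) : Prop := exists i, I i.

Definition leI {m : nat} (I : iset m) (y y' : vec m) : Prop :=
  forall i, I i -> y i <= y' i.
Definition ltI {m : nat} (I : iset m) (y y' : vec m) : Prop :=
  forall i, I i -> y i < y' i.
Definition lneqI {m : nat} (I : iset m) (y y' : vec m) : Prop :=
  leI I y y' /\ exists j, I j /\ y j < y' j.

Definition MI {m : nat} (I : iset m) (Y : vset m) : vset m :=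
  fun y' => Y y' /\ ~ (exists y, Y y /\ lneqI I y y').
Definition WMI {m : nat} (I : iset m) (Y : vset m) : vset m :=
  fun y' => Y y' /\ ~ (exists y, Y y /\ ltI I y y').

Definition fullI (m : nat) : iset m := fun _ => True.

Definition Meff {m : nat} (Y : vset m) : vset m := MI (fullI m) Y.
Definition WMeff {m : nat} (Y : vset m) : vset m := WMI (fullI m) Y.

Definition fdh {m : nat} (Y : vset m) : vset m :=
  fun z => exists y d, Y y /\ (forall i, 0 <= d i) /\ (forall i, z i = y i + d i).

Definition convex {m : nat} (S : vset m) : Prop :=
  forall x y (t : R), S x -> S y -> 0 <= t <= 1 ->
    S (fun i => t * x i + (1 - t) * y i).

Definition set_eq {m : nat} (A B : vset m) : Prop := forall y, A y <-> B y.
Definition set_sub {m : nat} (A B : vset m) : Prop := forall y, A y -> B y.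

(* If y' is weakly efficient but lies in no M_I Y, then for every nonempty I some
   point of Y is below y' on I, strictly in some coordinate j of I.  By induction
   on |I|, a point of the free disposal hull strictly below y' on I \ {j} can be
   mixed, with a small enough weight, into the point that is strict at j; this
   uses convexity of the hull and yields a point strictly below y' on all of I.
   For I = M this contradicts weak efficiency. *)

From Stdlib Require Import Reals Lra Lia List Classical ProofIrrelevance.
Open Scope R_scope.

Definition iset_del {m : nat} (I : iset m) (j : idx m) : iset m :=
  fun i => I i /\ i <> j.

Lemma idx_val_inj {m : nat} (i j : idx m) : proj1_sig i = proj1_sig j -> i = j.
Proof.
  destruct i as [i Hi], j as [j Hj]; simpl; intros ->.
  f_equal; apply proof_irrelevance.
Qed.

Lemma iset_del_ind (m : nat) (P : iset m -> Prop) :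
  (forall I, nonempty_iset I ->
     (forall j, I j -> nonempty_iset (iset_del I j) -> P (iset_del I j)) -> P I) ->
  forall I, nonempty_iset I -> P I.
Proof.
  intros Hstep.
  assert (Hbound : forall n I (l : list nat), (length l <= n)%nat ->
            (forall i, I i -> In (proj1_sig i) l) -> nonempty_iset I -> P I).
  { induction n as [|n IH]; intros I l Hl Hin HI.
    - destruct l; [|simpl in Hl; lia].
      destruct HI as [i Hi]; destruct (Hin i Hi).
    - apply Hstep; [exact HI|]. intros j Hj Hdel.
      apply (IH _ (remove Nat.eq_dec (proj1_sig j) l)); [| |exact Hdel].
      + pose proof (remove_length_lt Nat.eq_dec l (proj1_sig j) (Hin j Hj)); lia.
      + intros i [Hi Hij]. apply in_in_remove; [|exact (Hin i Hi)].
        intros E; exact (Hij (idx_val_inj i j E)). }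
  intros I HI. apply (Hbound m I (seq 0 m)); [now rewrite length_seq| |exact HI].
  intros [i Hi] _; simpl; apply in_seq; lia.
Qed.

Lemma ltI_full_lneqI {m : nat} (I : iset m) (y y' : vec m) :
  nonempty_iset I -> ltI (fullI m) y y' -> lneqI I y y'.
Proof.
  intros [i0 Hi0] Hlt. split.
  - intros i _; left; apply Hlt; exact Logic.I.
  - exists i0; split; [exact Hi0|apply Hlt; exact Logic.I].
Qed.

Lemma MI_sub_WMeff {m : nat} (I : iset m) (Y : vset m) :
  nonempty_iset I -> set_sub (MI I Y) (WMeff Y).
Proof.
  intros HI y' [Hy' Hn]. split; [exact Hy'|].
  intros [y [Hy Hlt]]. apply Hn. exists y. split; [exact Hy|].
  exact (ltI_full_lneqI I y y' HI Hlt).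
Qed.

Lemma fdh_self {m : nat} (Y : vset m) (y : vec m) : Y y -> fdh Y y.
Proof.
  intros Hy. exists y, (fun _ => 0). repeat split; [exact Hy|intros; lra|intros; lra].
Qed.

Lemma fdh_ltI {m : nat} (Y : vset m) (I : iset m) (w y' : vec m) :
  fdh Y w -> ltI I w y' -> exists y, Y y /\ ltI I y y'.
Proof.
  intros [y [d [Hy [Hd Hw]]]] Hlt. exists y. split; [exact Hy|].
  intros i Hi. specialize (Hlt i Hi). specialize (Hd i). rewrite Hw in Hlt. lra.
Qed.

Lemma small_step_lt (a b c : R) : a < b -> exists s, 0 < s <= 1 /\ a + s * (c - a) < b.
Proof.
  intros Hab. pose proof (Rabs_pos (c - a)) as Habs.
  exists ((b - a) / (b - a + Rabs (c - a))).
  assert (Hpos : 0 < b - a + Rabs (c - a)) by lra.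
  split; [split|].
  - apply Rdiv_lt_0_compat; lra.
  - apply Rmult_le_reg_r with (b - a + Rabs (c - a)); [exact Hpos|].
    unfold Rdiv; rewrite Rmult_assoc, Rinv_l by lra; lra.
  - assert (Hle : (b - a) / (b - a + Rabs (c - a)) * (c - a)
                  <= (b - a) / (b - a + Rabs (c - a)) * Rabs (c - a)).
    { apply Rmult_le_compat_l; [left; apply Rdiv_lt_0_compat; lra|apply RRle_abs]. }
    assert (Hlt : (b - a) / (b - a + Rabs (c - a)) * Rabs (c - a) < b - a).
    { apply Rmult_lt_reg_r with (b - a + Rabs (c - a)); [exact Hpos|].
      replace ((b - a) / (b - a + Rabs (c - a)) * Rabs (c - a) * (b - a + Rabs (c - a)))
        with ((b - a) * Rabs (c - a)) by (field; lra).
      nra. }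
    lra.
Qed.

Lemma fdh_ltI_del_extend {m : nat} (Y : vset m) (I : iset m) (j : idx m)
    (z w y' : vec m) :
  convex (fdh Y) -> fdh Y z -> leI I z y' -> z j < y' j ->
  fdh Y w -> ltI (iset_del I j) w y' ->
  exists w', fdh Y w' /\ ltI I w' y'.
Proof.
  intros Hc Hz Hle Hzj Hw Hwlt.
  destruct (small_step_lt (z j) (y' j) (w j) Hzj) as [s [Hs Hsj]].
  exists (fun i => (1 - s) * z i + (1 - (1 - s)) * w i). split.
  - apply Hc; [exact Hz|exact Hw|lra].
  - intros i Hi. destruct (classic (i = j)) as [->|Hij]; [lra|].
    assert (Hwi : w i < y' i) by (apply Hwlt; split; assumption).
    specialize (Hle i Hi). nra.
Qed.

Lemma fdh_ltI_of_lneqI {m : nat} (Y : vset m) (y' : vec m) :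
  convex (fdh Y) ->
  (forall I : iset m, nonempty_iset I -> exists y, Y y /\ lneqI I y y') ->
  forall I : iset m, nonempty_iset I -> exists w, fdh Y w /\ ltI I w y'.
Proof.
  intros Hc Hlneq. apply iset_del_ind. intros I HI IH.
  destruct (Hlneq I HI) as [z [Hz [Hle [j [Hj Hzj]]]]].
  destruct (classic (nonempty_iset (iset_del I j))) as [Hdel|Hdel].
  - destruct (IH j Hj Hdel) as [w [Hw Hwlt]].
    exact (fdh_ltI_del_extend Y I j z w y' Hc (fdh_self Y z Hz) Hle Hzj Hw Hwlt).
  - exists z. split; [exact (fdh_self Y z Hz)|].
    intros i Hi. destruct (classic (i = j)) as [->|Hij]; [exact Hzj|].
    exfalso. apply Hdel. exists i. split; assumption.
Qed.

Lemma WMeff_MI_nonempty {m : nat} (hm : (0 < m)%nat) (Y : vset m) (y' : vec m) :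
  convex (fdh Y) -> WMeff Y y' -> exists I, nonempty_iset I /\ MI I Y y'.
Proof.
  intros Hc [Hy' Hweak]. apply NNPP. intros Hnone.
  assert (Hlneq : forall I : iset m, nonempty_iset I -> exists y, Y y /\ lneqI I y y').
  { intros I HI. apply NNPP. intros Hno. apply Hnone. exists I. split; [exact HI|].
    split; assumption. }
  destruct (fdh_ltI_of_lneqI Y y' Hc Hlneq (fullI m)) as [w [Hw Hlt]].
  - exists (exist _ 0%nat hm). exact Logic.I.
  - exact (Hweak (fdh_ltI Y (fullI m) w y' Hw Hlt)).
Qed.

Theorem theorem2p1 (m : nat) (hm : (0 < m)%nat) (Y : vset m) :
  convex (fdh Y) ->
  (set_eq (WMeff Y) (Meff Y) <->
   (forall I : iset m, nonempty_iset I -> set_sub (MI I Y) (Meff Y))).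
Proof.
  intros Hc. split.
  - intros Heq I HI y' Hy'. apply Heq. exact (MI_sub_WMeff I Y HI y' Hy').
  - intros Hsub y'. split.
    + intros Hw. destruct (WMeff_MI_nonempty hm Y y' Hc Hw) as [I [HI HM]].
      exact (Hsub I HI y' HM).
    + apply (MI_sub_WMeff (fullI m)). exists (exist _ 0%nat hm). exact Logic.I.
Qed.
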